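(* Let $X$ be an uncertain variable on $\Omega$ with finite range, let $\epsilon>0$, and let $\mathfrak{M}$ be a map defined on $[\![X]\!]$ with finite image such that $Y:=\mathfrak{M}\circ X$ is $\epsilon$-identifiable, i.e., $|[\![X\mid Y(\omega)=y]\!]|\geq |[\![X]\!]|\,2^{-\epsilon}$ for all $y\in[\![Y]\!]$. Then $$\mathcal{L}_\star(X\rightarrow Y)\leq \log_2\big(|[\![X]\!]|(1-2^{-\epsilon}) + 1\big).$$
   Context: Let $\Omega$ be a set. An uncertain variable (uv) is a map $X:\Omega\to\mathbb{X}$ into some set; all uvs considered have finite ranges. The range of $X$ is $[\![X]\!]:=\{X(\omega):\omega\in\Omega\}$; the conditional range is $[\![X\mid Y(\omega)=y]\!]:=\{X(\omega):\omega\in\Omega,\ Y(\omega)=y\}$. The non-stochastic brute-force guessing leakage from a uv $U$ to a uv $Y$ is $$\mathcal{L}(U\rightarrow Y):=\log_2\left(\frac{|[\![U]\!]|}{\min_{y\in[\![Y]\!]}|[\![U\mid Y(\omega)=y]\!]|}\right).$$ The maximal non-stochastic brute-force leakage from $X$ to $Y$ is $$\mathcal{L}_\star(X\rightarrow Y):=\sup_{g}\ \mathcal{L}(g\circ X\rightarrow Y),$$ where the supremum ranges over all finite sets $\mathcal{U}$ and all functions $g:[\![X]\!]\to\mathcal{U}$. *)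

From HB Require Import structures.
From mathcomp Require Import all_boot all_order all_algebra.
From mathcomp Require Import finmap.
From mathcomp Require Import all_classical all_reals all_analysis.
Set Implicit Arguments. Unset Strict Implicit. Unset Printing Implicit Defensive.
Import Order.TTheory GRing.Theory Num.Theory.
Local Open Scope classical_set_scope.
Local Open Scope ring_scope.

Definition log2 {R : realType} (x : R) : R := ln x / ln 2.

Definition card_set {T : choiceType} (A : set T) : nat := (#|` fset_set A|)%fset.

Definition urange {Omega : Type} {T : Type} (X : Omega -> T) : set T := range X.

Definition ucrange {Omega : Type} {T V : Type} (X : Omega -> T) (Y : Omega -> V)
  (y : V) : set T := [set X w | w in [set w | Y w = y]].

(* non-stochastic brute-force guessing leakage L(U -> Y);
   the minimum over the finite set [[Y]] is taken as the infimum of that set. *)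
Definition nsbf_leakage {R : realType} {Omega : Type} {U : choiceType} {V : Type}
  (Uv : Omega -> U) (Y : Omega -> V) : R :=
  log2 ((card_set (urange Uv))%:R /
        inf [set (card_set (ucrange Uv Y y))%:R | y in urange Y]).

(* maximal non-stochastic brute-force leakage L_*(X -> Y):
   supremum over all finite sets (finTypes) Uset and all g : [[X]] -> Uset
   (g is given as a function on the codomain of X; only its values on [[X]]
   matter). *)
Definition max_nsbf_leakage {R : realType} {Omega : Type} {T : choiceType} {V : Type}
  (X : Omega -> T) (Y : Omega -> V) : \bar R :=
  ereal_sup [set r%:E | r in
    [set r : R | exists (Uset : finType) (g : T -> Uset),
                   r = nsbf_leakage (g \o X) Y]].

From HB Require Import structures.
From mathcomp Require Import all_boot all_order all_algebra.
From mathcomp Require Import finmap.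
From mathcomp Require Import all_classical all_reals all_analysis.
From mathcomp Require Import lra zify.
Set Implicit Arguments. Unset Strict Implicit. Unset Printing Implicit Defensive.
Import Order.TTheory GRing.Theory Num.Theory.
Local Open Scope classical_set_scope.
Local Open Scope ring_scope.

(* Write N = |[[X]]| and c = N (1 - 2^-eps), so that identifiability reads
   |[[X | Y = y]]| >= N - c for every y in [[Y]].  Fix a coarsening g of X
   and put n = |g([[X]])|.  Removing N - |[[X | Y = y]]| points from [[X]]
   removes at most as many points from its image under g, so
   |g([[X | Y = y]])| >= n - c; it is also >= 1 since the conditional range
   is nonempty.  Hence the minimum m of these cardinalities satisfies
   m >= max (1, n - c), and an elementary inequality gives n / m <= c + 1.
   Taking log2 bounds every L(g o X -> Y), hence their supremum. *)

Lemma card_imfset_sub {T U : choiceType} (f : T -> U) (A B : {fset T}) :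
  (B `<=` A)%fset -> (#|` (f @` A)%fset| + #|` B| <= #|` (f @` B)%fset| + #|` A|)%N.
Proof.
move=> /fsetIidPr AIB.
have cardA := cardfsID B A; rewrite AIB in cardA.
have splitA : A = (B `|` (A `\` B))%fset by rewrite -{1}(fsetID B A) AIB.
have -> : (f @` A)%fset = (f @` B `|` f @` (A `\` B))%fset.
  by rewrite -imfsetU -splitA.
have [+ _] := leq_card_fsetU (f @` B)%fset (f @` (A `\` B))%fset.
have : (#|` (f @` (A `\` B))%fset| <= #|` (A `\` B)%fset|)%N.
  exact: leq_imfset_card.
lia.
Qed.

Lemma card_set_image_sub {T U : choiceType} (f : T -> U) {A B : set T} :
  finite_set A -> B `<=` A ->
  (card_set (f @` A) + card_set B <= card_set (f @` B) + card_set A)%N.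
Proof.
move=> finA BA; have finB := sub_finite_set BA finA.
rewrite /card_set !fset_set_image //.
by apply: card_imfset_sub; rewrite -fset_set_sub.
Qed.

Lemma card_set_image_gt0 {T U : choiceType} (f : T -> U) {A : set T} :
  finite_set A -> A !=set0 -> (0 < card_set (f @` A))%N.
Proof.
move=> finA [a Aa]; rewrite /card_set cardfs_gt0.
apply/eqP => /(fset_set_set0 (finite_image f finA)) fA0.
have : (f @` A) (f a) by exists a.
by rewrite fA0.
Qed.

Lemma ratio_le_succ (R : realFieldType) (n m c : R) :
  0 <= c -> 1 <= m -> n - c <= m -> n / m <= c + 1.
Proof.
move=> c0 m1 nm; rewrite ler_pdivrMr; last lra.
have : 0 <= c * (m - 1) by rewrite mulr_ge0 // subr_ge0.
lra.
Qed.

Lemma ler_log2 (R : realType) (x y : R) : 0 < x -> x <= y -> log2 x <= log2 y.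
Proof.
move=> x0 xy; have ln2 : 0 < ln (2 : R) by apply: ln_gt0; lra.
rewrite /log2 ler_pM2r ?invr_gt0 // ler_ln ?posrE //.
exact: lt_le_trans xy.
Qed.

Section CoarseningLeakage.
Variables (R : realType) (Omega : Type) (T : choiceType) (V : Type).
Variables (X : Omega -> T) (Y : Omega -> V) (w0 : Omega) (c : R).
Hypothesis finX : finite_set (urange X).
Hypothesis c_ge0 : 0 <= c.
Hypothesis identifiable : forall y, urange Y y ->
  (card_set (urange X))%:R - c <= (card_set (ucrange X Y y))%:R.

Lemma urange_comp {U : Type} (g : T -> U) : urange (g \o X) = g @` urange X.
Proof. by rewrite /urange image_comp. Qed.

Lemma ucrange_comp {U : Type} (g : T -> U) y :
  ucrange (g \o X) Y y = g @` ucrange X Y y.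
Proof. by rewrite /ucrange image_comp. Qed.

Lemma ucrange_sub y : ucrange X Y y `<=` urange X.
Proof. by move=> _ [w _ <-]; exists w. Qed.

Lemma ucrange_nonempty y : urange Y y -> ucrange X Y y !=set0.
Proof. by move=> [w _ <-]; exists (X w); exists w. Qed.

Lemma coarsening_identifiable {U : choiceType} (g : T -> U) y : urange Y y ->
  (card_set (urange (g \o X)))%:R - c <= (card_set (ucrange (g \o X) Y y))%:R :> R.
Proof.
move=> Yy; have := identifiable Yy.
have := card_set_image_sub g finX (ucrange_sub (y := y)).
rewrite urange_comp ucrange_comp -(ler_nat R) !natrD.
lra.
Qed.

Definition cond_cards {U : choiceType} (g : T -> U) : set R :=
  [set (card_set (ucrange (g \o X) Y y))%:R | y in urange Y].

Lemma cond_cards_ge1 {U : choiceType} (g : T -> U) : 1 <= inf (cond_cards g).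
Proof.
apply: lb_le_inf.
  by exists (card_set (ucrange (g \o X) Y (Y w0)))%:R; exists (Y w0) => //; exists w0.
move=> _ [y Yy <-]; rewrite ler1n ucrange_comp.
apply: card_set_image_gt0 (ucrange_nonempty Yy).
exact: sub_finite_set (ucrange_sub (y := y)) finX.
Qed.

Lemma cond_cards_ge {U : choiceType} (g : T -> U) :
  (card_set (urange (g \o X)))%:R - c <= inf (cond_cards g).
Proof.
apply: lb_le_inf.
  by exists (card_set (ucrange (g \o X) Y (Y w0)))%:R; exists (Y w0) => //; exists w0.
by move=> _ [y Yy <-]; exact: coarsening_identifiable.
Qed.

Lemma coarsening_leakage_le {U : choiceType} (g : T -> U) :
  nsbf_leakage (g \o X) Y <= log2 (c + 1).
Proof.
have m1 := cond_cards_ge1 g.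
apply: ler_log2; last exact: ratio_le_succ (cond_cards_ge g).
apply: divr_gt0; last lra.
rewrite ltr0n urange_comp; apply: card_set_image_gt0 => //.
by exists (X w0); exists w0.
Qed.

End CoarseningLeakage.

Theorem mainTheorem7 (R : realType) (Omega : Type) (T V : choiceType)
  (X : Omega -> T) (M : T -> V) (eps : R) :
  inhabited Omega ->
  finite_set (urange X) ->
  0 < eps ->
  finite_set (M @` urange X) ->
  (forall y, urange (M \o X) y ->
     (card_set (urange X))%:R * powR 2 (- eps) <=
       (card_set (ucrange X (M \o X) y))%:R :> R) ->
  (max_nsbf_leakage X (M \o X) <=
     (log2 ((card_set (urange X))%:R * (1 - powR 2 (- eps)) + 1))%:E)%E.
Proof.
move=> [w0] finX eps0 _ eps_identifiable.
set c : R := (card_set (urange X))%:R * (1 - powR 2 (- eps)).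
have pow_le1 : powR 2 (- eps) <= 1.
  by rewrite -[leRHS](powRr0 2); apply: ler_powR; lra.
have c_ge0 : 0 <= c by rewrite mulr_ge0 // subr_ge0.
have identifiable y : urange (M \o X) y ->
    (card_set (urange X))%:R - c <= (card_set (ucrange X (M \o X) y))%:R.
  by move=> /eps_identifiable; rewrite /c mulrBr mulr1 opprB addrCA subrr addr0.
apply: ge_ereal_sup => _ [_ [U [g ->]] <-]; rewrite lee_fin.
exact/(coarsening_leakage_le w0 finX c_ge0 identifiable g).
Qed.
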